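(* Let $\mathbf R'=\{R'_i,t'_i\}$, $\mathbf S=\{S_i,u_i\}$, $\mathbf S'=\{S'_i,u'_i\}$ be preperfectoid towers arising from pairs $(R',I'_0)$, $(S,J_0)$, $(S',J'_0)$, with first perfectoid pillars $I'_1,J_1,J'_1$. Let $\psi'\colon\mathbf R'\to\mathbf S'$ and $\sigma\colon\mathbf S\to\mathbf S'$ be morphisms of towers with $I'_0S'_0=J_0S'_0=J'_0$ and $I'_1S'_1=J_1S'_1=J'_1$ (extensions along $\psi'_0,\sigma_0$, resp. $\psi'_1,\sigma_1$), and with every $\sigma_i$ surjective. Let $\mathbf R=\{R_i,t_i\}$ be the levelwise fibre product $R_i=R'_i\times_{S'_i}S_i$ with projections $\rho\colon\mathbf R\to\mathbf R'$, $\psi\colon\mathbf R\to\mathbf S$, and define ideals $I_0:=I'_0\times_{J'_0}J_0\subset R_0$ and $I_1:=I'_1\times_{J'_1}J_1\subset R_1$. Assume: (i) $I_0$ is generated by an element $f_0=(f'_0,g_0)$ with $f'_0R'_0=I'_0$ and $g_0S_0=J_0$; (ii) $I_1$ is generated by an element $f_1=(f'_1,g_1)$ with $f'_1R'_1=I'_1$ and $g_1S_1=J_1$; (iii) for every $i\ge0$, the squares of modules formed by $I_0R_i\to J_0S_i$, $I_0R_i\to I'_0R'_i$, $I'_0R'_i\to J'_0S'_i$, $J_0S_i\to J'_0S'_i$ (restrictions of $\psi_i,\rho_i,\psi'_i,\sigma_i$), and by $I_1R_{i+1}\to J_1S_{i+1}$, $I_1R_{i+1}\to I'_1R'_{i+1}$,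 $I'_1R'_{i+1}\to J'_1S'_{i+1}$, $J_1S_{i+1}\to J'_1S'_{i+1}$ (restrictions of $\psi_{i+1},\rho_{i+1},\psi'_{i+1},\sigma_{i+1}$) are cartesian; (iv) for every $i\ge0$ the map $(R'_i)_{I'_0\text{-tor}}\oplus(S_i)_{J_0\text{-tor}}\to(S'_i)_{J'_0\text{-tor}}$, $(a,b)\mapsto\psi'_i(a)+\sigma_i(b)$, is surjective. Let $R:=R_0$. Then: (1) $\mathbf R$ is a preperfectoid tower arising from $(R,I_0)$ with first perfectoid pillar $I_1$; (2) if $\mathbf R',\mathbf S,\mathbf S'$ are perfectoid towers, then $\mathbf R$ is a perfectoid tower arising from $(R,I_0)$; (3) the tilt of $\mathbf R$ is the tower $\{{R'_i}^{s.\flat}\times_{{S'_i}^{s.\flat}}S_i^{s.\flat}\}_{i\ge0}$ (fibre products along the tilts of $\psi'$ and $\sigma$).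
   Context: Fix a prime $p$; rings are commutative with $1$. For a ring $A$, an ideal $I$ and an $A$-module $M$, $M_{I\text{-tor}}$ is the submodule of $x\in M$ such that for every $a\in I$ some $a^nx=0$; $\varphi_{I,A}\colon A_{I\text{-tor}}\to A/IA$ is inclusion followed by projection. $\varphi$ is absolute Frobenius. A tower of rings $\{R_i,t_i\}_{i\ge0}$ is a sequence of ring maps $R_0\xrightarrow{t_0}R_1\to\cdots$; morphisms of towers are compatible families of ring maps. For a ring $R$ and ideal $I_0$, write $\overline{R_i}=R_i/I_0R_i$, $\overline{t_i}$ the induced maps. A purely inseparable tower arising from $(R,I_0)$: (a) $R_0=R$, $p\in I_0$; (b) each $\overline{t_i}$ injective; (c) $\varphi(\overline{R_{i+1}})\subset\overline{t_i}(\overline{R_i})$; then $F_i\colon\overline{R_{i+1}}\to\overline{R_i}$ is the unique ring map with $\overline{t_i}\circ F_i=\varphi$. Conditions: (d) each $F_i$ surjective; (e) $I_0R_i$ lies in the Jacobson radical of $R_i$ for all $i$; (f) $I_0$ principal and a principal ideal $I_1\subset R_1$ (the first perfectoid pillar) with $I_1^p=I_0R_1$ and $\ker F_i=I_1\overline{R_{i+1}}$ for all $i$; (g) for all $i$, $I_0(R_i)_{I_0\text{-tor}}=0$ and a bijection $(F_i)_{\mathrm{tor}}\colon(R_{i+1})_{I_0\text{-tor}}\to(R_i)_{I_0\text{-tor}}$ with $\varphi_{I_0,R_i}\circ(F_i)_{\mathrm{tor}}=F_i\circ\varphi_{I_0,R_{i+1}}$. Preperfectoid: (a)–(d),(f),(g);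 perfectoid: additionally (e). Tilt: $R_i^{s.\flat}:=\varprojlim(\cdots\xrightarrow{F_{i+1}}\overline{R_{i+1}}\xrightarrow{F_i}\overline{R_i})$ with transition maps induced by the $\overline{t_j}$. For a morphism of towers $\alpha$ with $\alpha_0(I_0)\subset J_0$ between preperfectoid towers, $\alpha_i$ induce maps $\overline{R_j}\to\overline{S_j}$ compatible with Frobenius projections, hence maps $\alpha_i^{s.\flat}\colon R_i^{s.\flat}\to S_i^{s.\flat}$ (the tilt of $\alpha$). *)

(* Towers of commutative rings, ideals as Prop-valued
   predicates, quotients R_i / I_0 R_i encoded via congruence modulo the
   extended ideal. *)
From HB Require Import structures.
From mathcomp Require Import all_boot all_order all_algebra.
Set Implicit Arguments. Unset Strict Implicit. Unset Printing Implicit Defensive.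
Import GRing.Theory.
Local Open Scope ring_scope.

Section Ideals.
Variable R : comPzRingType.

Definition subsetR := R -> Prop.

Definition is_ideal (I : subsetR) : Prop :=
  [/\ I 0, (forall x y, I x -> I y -> I (x + y)) & (forall r x, I x -> I (r * x))].

Definition gen (A : subsetR) : subsetR := fun y =>
  exists s : seq (R * R), (forall q, q \in s -> A q.2) /\ y = \sum_(q <- s) q.1 * q.2.

Definition idmul (I J : subsetR) : subsetR :=
  gen (fun z => exists a b, [/\ I a, J b & z = a * b]).

Fixpoint idealX (I : subsetR) (n : nat) : subsetR :=
  match n with
  | 0 => gen (fun z => z = 1)
  | n'.+1 => idmul (idealX I n') I
  end.

Definition generates (f : R) (I : subsetR) : Prop :=
  forall x, I x <-> exists a, x = a * f.

Definition principal (I : subsetR) : Prop := exists f, generates f I.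

Definition maximal_ideal (M : subsetR) : Prop :=
  [/\ is_ideal M, ~ M 1 &
      forall N, is_ideal N -> (forall x, M x -> N x) -> ~ N 1 -> forall x, N x -> M x].

Definition jacobson (x : R) : Prop := forall M, maximal_ideal M -> M x.

End Ideals.

Definition ext (R S : comPzRingType) (f : R -> S) (I : subsetR R) : subsetR S :=
  gen (fun y => exists x, I x /\ y = f x).

(* torsion: M_{I-tor} for the R0-module M = Ri via T : R0 -> Ri *)
Definition tor (R0 Ri : comPzRingType) (T : R0 -> Ri) (I : subsetR R0) (x : Ri) : Prop :=
  forall a, I a -> exists n, T a ^+ n * x = 0.

Unset Implicit Arguments.
Section Towers.
Variable R : nat -> comPzRingType.
Variable t : forall i, {rmorphism R i -> R i.+1}.

Fixpoint tcomp (i : nat) : R 0%N -> R i :=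
  match i return R 0%N -> R i with
  | 0 => fun x => x
  | i'.+1 => fun x => t i' (tcomp i' x)
  end.

Fixpoint tup1 (i : nat) : R 1%N -> R i.+1 :=
  match i return R 1%N -> R i.+1 with
  | 0 => fun x => x
  | i'.+1 => fun x => t i'.+1 (tup1 i' x)
  end.

Variable p : nat.
Variable I0 : subsetR (R 0%N).
Variable I1 : subsetR (R 1%N).

Definition I0R (i : nat) : subsetR (R i) := ext (tcomp i) I0.

(* Fis i x y  <->  F_i(class of y) = class of x in R_i / I_0 R_i,
   i.e. t_i(x) = y^p modulo I_0 R_{i+1}. *)
Definition Fis (i : nat) (x : R i) (y : R i.+1) : Prop :=
  I0R i.+1 (t i x - y ^+ p).

Record preperfectoid : Prop := {
  pp_ideal : is_ideal I0;
  pp_p : I0 p%:R;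
  (* (b) the induced maps R_i/I_0R_i -> R_{i+1}/I_0R_{i+1} are injective *)
  pp_inj : forall i (x : R i), I0R i.+1 (t i x) -> I0R i x;
  (* (c) Frobenius of R_{i+1}/I_0 lands in the image of R_i/I_0 *)
  pp_frob : forall i (y : R i.+1), exists x : R i, Fis i x y;
  (* (d) F_i surjective *)
  pp_Fsurj : forall i (x : R i), exists y : R i.+1, Fis i x y;
  pp_I0princ : principal I0;
  pp_I1princ : principal I1;
  pp_I1pow : forall z, idealX I1 p z <-> I0R 1%N z;
  pp_ker : forall i (y : R i.+1),
      (exists x : R i, I0R i x /\ Fis i x y) <->
      (exists z, ext (tup1 i) I1 z /\ I0R i.+1 (y - z));
  pp_torkill : forall i a (x : R i), I0 a -> tor (tcomp i) I0 x -> tcomp i a * x = 0;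
  pp_Ftor : forall i, exists g : R i.+1 -> R i,
      [/\ forall y, tor (tcomp i.+1) I0 y -> tor (tcomp i) I0 (g y),
          (forall y y', tor (tcomp i.+1) I0 y -> tor (tcomp i.+1) I0 y' -> g y = g y' -> y = y'),
          (forall x, tor (tcomp i) I0 x -> exists y, tor (tcomp i.+1) I0 y /\ g y = x) &
          forall y, tor (tcomp i.+1) I0 y -> Fis i (g y) y]
}.

Definition perfectoid : Prop :=
  preperfectoid /\ forall i (x : R i), I0R i x -> jacobson x.

(* elements of the tilt R_i^{s.flat}: compatible sequences (x_j)_{j>=0} with
   x_j in R_{j+i} (representing its class in R_{j+i}/I_0R_{j+i}) and
   F_{j+i}(x_{j+1}) = x_j *)
Definition is_tilt (i : nat) (x : forall j, R (j + i)%N) : Prop :=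
  forall j, Fis (j + i)%N (x j) (x j.+1).

Definition tilt_eq (i : nat) (x y : forall j, R (j + i)%N) : Prop :=
  forall j, I0R (j + i)%N (x j - y j).

End Towers.

Definition tower_mor (R S : nat -> comPzRingType)
  (t : forall i, {rmorphism R i -> R i.+1}) (u : forall i, {rmorphism S i -> S i.+1})
  (a : forall i, {rmorphism R i -> S i}) : Prop :=
  forall i x, a i.+1 (t i x) = u i (a i x).

Definition tilt_map (R S : nat -> comPzRingType) (a : forall i, {rmorphism R i -> S i})
  (i : nat) (x : forall j, R (j + i)%N) : forall j, S (j + i)%N :=
  fun j => a (j + i)%N (x j).

Definition cartesian (R R' S S' : comPzRingType)
  (P : subsetR R) (A : subsetR R') (B : subsetR S) (C : subsetR S')
  (r : R -> R') (s : R -> S) (f : R' -> S') (g : S -> S') : Prop :=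
  [/\ (forall x, P x -> A (r x) /\ B (s x)),
      (forall a, A a -> C (f a)) /\ (forall b, B b -> C (g b)),
      (forall x, P x -> f (r x) = g (s x)),
      (forall x y, P x -> P y -> r x = r y -> s x = s y -> x = y) &
      (forall a b, A a -> B b -> f a = g b -> exists x, [/\ P x, r x = a & s x = b])].
Arguments cartesian {R R' S S'} P A B C r s f g.

From Pilot Require Import Defs.
From HB Require Import structures.
From mathcomp Require Import all_boot all_order all_algebra.
From mathcomp Require Import ring.
From mathcomp Require classical_sets.
From mathcomp Require boolp.
From Stdlib Require Import Classical.
Import GRing.Theory.
Set Implicit Arguments. Unset Strict Implicit. Unset Printing Implicit Defensive.

(* Everything about the fibre product tower R_i = R'_i x_{S'_i} S_i is read off on the
   two components: by the cartesian squares (iii), membership in I_0 R_i and I_1 R_{i+1},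
   hence the Frobenius relation t_i(x) = y^p mod I_0, hold in R exactly when they hold
   after rho and psi. To build an element of R one takes solutions in R' and S; their
   images in S' agree only modulo J'_0 S' (for p-th roots, modulo the pillar J'_1 S'),
   and since sigma is onto and J'_0 = J_0 S', J'_1 = J_1 S', the discrepancy lifts to S
   and is absorbed there. On torsion the inverse of F_i is glued from those of R' and S,
   which agree in S' by uniqueness of torsion p-th roots. Units, hence the Jacobson
   radical, are also detected on components, and the tilt is the same gluing carried out
   at every level of the inverse limit. *)

#[local] Arguments pp_p {R t p I0 I1}.
#[local] Arguments pp_inj {R t p I0 I1}.
#[local] Arguments pp_frob {R t p I0 I1}.
#[local] Arguments pp_Fsurj {R t p I0 I1}.
#[local] Arguments pp_I0princ {R t p I0 I1}.
#[local] Arguments pp_I1princ {R t p I0 I1}.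
#[local] Arguments pp_I1pow {R t p I0 I1}.
#[local] Arguments pp_ker {R t p I0 I1}.
#[local] Arguments pp_torkill {R t p I0 I1}.
#[local] Arguments pp_Ftor {R t p I0 I1}.

Section IdealTheory.
Local Open Scope ring_scope.
Variable R : comPzRingType.
Implicit Types (I J A : subsetR R) (x y r : R).

Section Closure.
Variable I : subsetR R.
Hypothesis idI : is_ideal I.

Lemma ideal0 : I 0. Proof. by case: idI. Qed.

Lemma idealD x y : I x -> I y -> I (x + y). Proof. by case: idI => _ + _; apply. Qed.

Lemma idealMl r x : I x -> I (r * x). Proof. by case: idI => _ _; apply. Qed.

Lemma idealMr r x : I x -> I (x * r). Proof. by rewrite mulrC; apply: idealMl. Qed.

Lemma idealN x : I x -> I (- x). Proof. by rewrite -mulN1r; apply: idealMl. Qed.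

Lemma idealB x y : I x -> I y -> I (x - y).
Proof. by move=> Ix Iy; apply: idealD => //; apply: idealN. Qed.

Lemma ideal_sum (T : eqType) (s : seq T) (F : T -> R) :
  (forall q, q \in s -> I (F q)) -> I (\sum_(q <- s) F q).
Proof.
elim: s => [|a s IHs] Is; first by rewrite big_nil; apply: ideal0.
rewrite big_cons; apply: idealD; first by apply: Is; rewrite mem_head.
by apply: IHs => q sq; apply: Is; rewrite in_cons sq orbT.
Qed.

Lemma idealXX x y n : I (x - y) -> I (x ^+ n - y ^+ n).
Proof. by rewrite subrXX; apply: idealMr. Qed.

Lemma ideal_binomial p x y : prime p -> I p%:R -> I ((x + y) ^+ p - x ^+ p - y ^+ p).
Proof.
case: p => // n pr_p Ip.
rewrite exprDn big_ord_recl big_ord_recr /= subn0 subnn !expr0 mulr1 mul1r bin0 binn !mulr1n.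
set S := (\sum_(i < n) _).
have -> : x ^+ n.+1 + (S + y ^+ bump 0 n) - x ^+ n.+1 - y ^+ n.+1 = S.
  by rewrite /bump add1n; ring.
apply: ideal_sum => j _; rewrite -mulr_natr; apply: idealMl.
have /dvdnP[k ->] : (n.+1 %| 'C(n.+1, bump 0 j))%N.
  by apply: prime_dvd_bin; rewrite // /bump /= add1n ltnS ltn_ord.
by rewrite natrM; apply: idealMl.
Qed.

End Closure.

Definition multiples (m : R) : subsetR R := fun z => exists c, z = c * m.

Lemma multiples_ideal m : is_ideal (multiples m).
Proof.
split; first by exists 0; rewrite mul0r.
- by move=> _ _ [a ->] [b ->]; exists (a + b); rewrite mulrDl.
- by move=> r _ [a ->]; exists (r * a); rewrite mulrA.
Qed.

Lemma generates_ideal f I : generates f I -> is_ideal I.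
Proof.
move=> gfI; have [I0 ID IM] := multiples_ideal f.
split=> [|x y /gfI Ix /gfI Iy|r x /gfI Ix]; apply/gfI; [exact: I0|exact: ID|exact: IM].
Qed.

Lemma generates_mem f I : generates f I -> I f.
Proof. by move=> gfI; apply/gfI; exists 1; rewrite mul1r. Qed.

Lemma gen_ideal A : is_ideal (gen A).
Proof.
split; first by exists [::]; rewrite big_nil.
- move=> _ _ [s [As ->]] [s' [As' ->]]; exists (s ++ s'); split; last by rewrite big_cat.
  by move=> q; rewrite mem_cat => /orP[/As|/As'].
- move=> r _ [s [As ->]]; exists [seq (r * q.1, q.2) | q <- s]; split.
    by move=> q0 /mapP[q sq ->]; exact: As sq.
  by rewrite mulr_sumr big_map; apply: eq_bigr => q _; rewrite mulrA.
Qed.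

Lemma sub_gen A x : A x -> gen A x.
Proof. by exists [:: (1, x)]; split=> [q /[!inE] /eqP ->|]; rewrite ?big_seq1 ?mul1r. Qed.

Lemma gen_sub_ideal A I : is_ideal I -> (forall z, A z -> I z) -> forall z, gen A z -> I z.
Proof.
move=> idI AI _ [s [As ->]]; apply: ideal_sum => // q sq.
by apply: idealMl => //; apply/AI/As.
Qed.

Lemma idealX_ideal I n : is_ideal (idealX I n).
Proof. by case: n => [|n]; apply: gen_ideal. Qed.

Lemma idealX_multiples I f n :
  (forall z, I z -> multiples f z) -> forall z, idealX I n z -> multiples (f ^+ n) z.
Proof.
move=> If; elim: n => [|n IHn] /=; apply: gen_sub_ideal (multiples_ideal _) _.
  by move=> _ ->; exists 1; rewrite mulr1.
move=> _ [a [b [/IHn[c ->] /If[d ->] ->]]].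
by exists (c * d); rewrite exprSr mulrACA.
Qed.

Lemma idealX_exp I f n : I f -> idealX I n (f ^+ n).
Proof.
move=> If; elim: n => [|n IHn]; apply: sub_gen; first by rewrite expr0.
by exists (f ^+ n), f; rewrite exprSr.
Qed.

Definition proper_ideal_over J X := [/\ is_ideal X, (forall x, J x -> X x) & ~ X 1].

Lemma chain_union_proper J (F : subsetR R -> Prop) X0 x0 :
  F X0 -> X0 x0 -> (forall X x, F X -> X x -> proper_ideal_over J X) ->
  (forall X Y, F X -> F Y -> (forall x, X x -> Y x) \/ (forall x, Y x -> X x)) ->
  proper_ideal_over J (fun x => exists2 X, F X & X x).
Proof.
move=> FX0 X0x0 Fpr Ftot; have [idX0 JX0 _] := Fpr _ _ FX0 X0x0.
split; first split.
- by exists X0 => //; apply: ideal0.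
- move=> x y [X FX Xx] [Y FY Yy].
  have [idX _ _] := Fpr _ _ FX Xx; have [idY _ _] := Fpr _ _ FY Yy.
  have [XY|YX] := Ftot _ _ FX FY.
    by exists Y => //; apply: idealD => //; apply: XY.
  by exists X => //; apply: idealD => //; apply: YX.
- move=> r x [X FX Xx]; have [idX _ _] := Fpr _ _ FX Xx.
  by exists X => //; apply: idealMl.
- by move=> x Jx; exists X0 => //; apply: JX0.
- by move=> [X FX X1]; have [] := Fpr _ _ FX X1.
Qed.

Lemma exists_maximal_ideal J : is_ideal J -> ~ J 1 ->
  exists M, maximal_ideal M /\ forall x, J x -> M x.
Proof.
move=> idJ J1.
(* Zorn's lemma also needs an upper bound for the empty chain, hence the empty set in P. *)
pose P X := (forall x, ~ X x) \/ proper_ideal_over J X.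
have [M [PM Mmax]] : exists M, P M /\ forall N, classical_sets.proper M N -> ~ P N.
  apply: classical_sets.Zorn_bigcup => F FP Ftot.
  have [[X0 FX0 [x0 X0x0]]|noF] := classic (exists2 X, F X & exists x, X x).
    right; apply: chain_union_proper FX0 X0x0 _ Ftot.
    by move=> X x FX Xx; case: (FP X FX) => // /(_ x).
  by left=> x [X FX Xx]; apply: noF; exists X => //; exists x.
have [idM JM M1] : proper_ideal_over J M.
  case: PM => // M0; exfalso; apply: (Mmax J); last by right.
  by split=> [x /M0|/(_ 0 (ideal0 idJ))/M0].
exists M; split=> //; split=> // N idN MN N1 x Nx; apply: NNPP => Mx.
apply: (Mmax N); last by right; split=> // y /JM/MN.
by split=> // NM; apply/Mx/NM.
Qed.

Lemma maximal_ideal_coprime M x : maximal_ideal M -> ~ M x ->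
  exists m r, M m /\ 1 = m + r * x.
Proof.
case=> idM M1 Mmax Mx.
pose N y := exists m r, M m /\ y = m + r * x.
have idN : is_ideal N.
  split; first by exists 0, 0; rewrite mul0r addr0; split=> //; apply: ideal0.
  - move=> _ _ [m1 [r1 [Mm1 ->]]] [m2 [r2 [Mm2 ->]]].
    by exists (m1 + m2), (r1 + r2); split; [apply: idealD | ring].
  - move=> r _ [m [r1 [Mm ->]]].
    by exists (r * m), (r * r1); split; [apply: idealMl | ring].
have MN y : M y -> N y by exists y, 0; rewrite mul0r addr0.
apply: NNPP => N1; apply: Mx; apply: (Mmax N) => //.
by exists 0, 1; rewrite mul1r add0r; split=> //; apply: ideal0.
Qed.

Lemma jacobsonP x : jacobson x <-> forall r, exists w, (1 - r * x) * w = 1.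
Proof.
split=> [Jx r|unit_x M maxM].
  apply: NNPP => noinv.
  have [|M [maxM sM]] := exists_maximal_ideal (multiples_ideal (1 - r * x)).
    by move=> [c c1]; apply: noinv; exists c; rewrite mulrC -c1.
  have [idM M1 _] := maxM; apply: M1; rewrite -(subrK (r * x) 1); apply: idealD => //.
    by apply: sM; exists 1; rewrite mul1r.
  by apply: idealMl => //; apply: Jx maxM.
apply: NNPP => Mx; have [idM M1 _] := maxM.
have [m [r [Mm mrx]]] := maximal_ideal_coprime maxM Mx.
have [w rxw] := unit_x r; apply: M1.
by rewrite -rxw; apply: idealMr => //; rewrite {1}mrx addrK.
Qed.

End IdealTheory.

Section Extension.
Local Open Scope ring_scope.
Variables (R S : comPzRingType) (f : {rmorphism R -> S}).
Implicit Types (I : subsetR R).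

Lemma ext_ideal I : is_ideal (ext f I). Proof. exact: gen_ideal. Qed.

Lemma ext_in I x : I x -> ext f I (f x).
Proof. by move=> Ix; apply: sub_gen; exists x. Qed.

Lemma preim_ideal (J : subsetR S) : is_ideal J -> is_ideal (fun x => J (f x)).
Proof.
move=> idJ; split=> [|x y Jx Jy|r x Jx]; rewrite ?rmorph0 ?rmorphD ?rmorphM.
- exact: ideal0.
- exact: idealD.
- exact: idealMl.
Qed.

Lemma ext_generates g I : generates g I -> generates (f g) (ext f I).
Proof.
move=> gI z; split.
  apply: (gen_sub_ideal (multiples_ideal (f g))) => _ [x [/gI[a ->] ->]].
  by exists (f a); rewrite rmorphM.
by move=> [c ->]; apply: idealMl; [apply: ext_ideal | apply/ext_in/(generates_mem gI)].
Qed.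

Lemma generates_image g I J : (forall y, exists x, f x = y) ->
  generates g I -> generates (f g) J -> forall z, J z -> exists2 e, I e & f e = z.
Proof.
move=> f_surj gI gJ _ /gJ[c ->]; have [c0 <-] := f_surj c.
by exists (c0 * g); [apply/gI; exists c0 | rewrite rmorphM].
Qed.

End Extension.

Section Towers.
Local Open Scope ring_scope.
Variables (R : nat -> comPzRingType) (t : forall i, {rmorphism R i -> R i.+1}).

Lemma tcomp_is_zmod_morphism i : zmod_morphism (tcomp R t i).
Proof. by elim: i => //= i IHi x y; rewrite IHi rmorphB. Qed.

Lemma tcomp_is_monoid_morphism i : monoid_morphism (tcomp R t i).
Proof. by elim: i => //= i [IHi1 IHiM]; split=> [|x y]; rewrite ?IHi1 ?IHiM ?rmorph1 ?rmorphM. Qed.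

HB.instance Definition _ i :=
  GRing.isZmodMorphism.Build _ _ (tcomp R t i) (tcomp_is_zmod_morphism i).
HB.instance Definition _ i :=
  GRing.isMonoidMorphism.Build _ _ (tcomp R t i) (tcomp_is_monoid_morphism i).

Lemma tup1_is_zmod_morphism i : zmod_morphism (tup1 R t i).
Proof. by elim: i => //= i IHi x y; rewrite IHi rmorphB. Qed.

Lemma tup1_is_monoid_morphism i : monoid_morphism (tup1 R t i).
Proof. by elim: i => //= i [IHi1 IHiM]; split=> [|x y]; rewrite ?IHi1 ?IHiM ?rmorph1 ?rmorphM. Qed.

HB.instance Definition _ i :=
  GRing.isZmodMorphism.Build _ _ (tup1 R t i) (tup1_is_zmod_morphism i).
HB.instance Definition _ i :=
  GRing.isMonoidMorphism.Build _ _ (tup1 R t i) (tup1_is_monoid_morphism i).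

Lemma tcompS i x : tcomp R t i.+1 x = tup1 R t i (t 0%N x).
Proof. by elim: i => //= i ->. Qed.

Variables (p : nat) (I0 : subsetR (R 0%N)) (I1 : subsetR (R 1%N)).
Local Notation I0R := (I0R R t I0).
Local Notation Fis := (Fis R t p I0).
Local Notation pillar i := (ext (tup1 R t i) I1).
Local Notation tor i := (tor (tcomp R t i) I0).

Lemma I0R_ideal i : is_ideal (I0R i). Proof. exact: ext_ideal. Qed.

Lemma I0R_in i a : I0 a -> I0R i (tcomp R t i a). Proof. exact: ext_in. Qed.

Lemma I0R_generates f i : generates f I0 -> generates (tcomp R t i f) (I0R i).
Proof. exact: ext_generates. Qed.

Lemma I0R_t i z : I0R i z -> I0R i.+1 (t i z).
Proof.
move: z; apply: (gen_sub_ideal (preim_ideal (t i) (I0R_ideal i.+1))) => _ [a [I0a ->]].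
exact: (I0R_in i.+1 I0a).
Qed.

Lemma Fis_eqmodl i x x' y : I0R i (x' - x) -> Fis i x y -> Fis i x' y.
Proof.
move=> xx'; rewrite /Defs.Fis => Fxy.
have -> : t i x' - y ^+ p = t i (x' - x) + (t i x - y ^+ p) by rewrite rmorphB; ring.
by apply: (idealD (I0R_ideal _)) => //; apply: I0R_t.
Qed.

Lemma Fis_eqmodr i x y y' : I0R i.+1 (y' - y) -> Fis i x y -> Fis i x y'.
Proof.
move=> yy'; rewrite /Defs.Fis => Fxy; have idI := I0R_ideal i.+1.
have -> : t i x - y' ^+ p = (t i x - y ^+ p) - (y' ^+ p - y ^+ p) by ring.
by apply: (idealB idI) => //; apply: idealXX.
Qed.

Lemma Fis_I0R_iff i y : (exists x, I0R i x /\ Fis i x y) <-> I0R i.+1 (y ^+ p).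
Proof.
have idI := I0R_ideal i.+1.
rewrite /Defs.Fis; split=> [[x [Ix Fxy]]|Iyp].
  have -> : y ^+ p = t i x - (t i x - y ^+ p) by ring.
  by apply: (idealB idI) => //; apply: I0R_t.
by exists 0; split; [apply: ideal0 (I0R_ideal i) | rewrite rmorph0 sub0r; apply: idealN].
Qed.

Lemma torB i (x y : R i) : tor i x -> tor i y -> tor i (x - y).
Proof.
move=> tx ty a I0a; have [[m am] [n an]] := (tx a I0a, ty a I0a).
by exists (m + n)%N; rewrite exprD mulrBr mulrAC am mul0r -mulrA an mulr0 subr0.
Qed.

Hypothesis pp : preperfectoid R t p I0 I1.

Lemma I0R_p i : I0R i p%:R.
Proof. by rewrite -(rmorph_nat (tcomp R t i)); apply/I0R_in/(pp_p pp). Qed.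

Lemma tor_mul_I0R i (x z : R i) : tor i x -> I0R i z -> x * z = 0.
Proof.
have [f gf] := pp_I0princ pp; move=> tx /(I0R_generates (i := i) gf)[c ->].
by rewrite mulrCA [x * _]mulrC (pp_torkill pp) ?mulr0 //; apply: generates_mem gf.
Qed.

Lemma tor_I0R_eq0 i (x : R i) : tor i x -> I0R i x -> x = 0.
Proof.
have [f gf] := pp_I0princ pp; have I0f := generates_mem gf.
move=> tx /(I0R_generates (i := i) gf)[c xc]; have [n fnx] := tx f I0f.
have tc : tor i c.
  move=> _ /gf[d ->]; exists n.+1.
  rewrite rmorphM exprMn [tcomp R t i f ^+ _]exprSr -!mulrA [tcomp R t i f * c]mulrC.
  by rewrite -xc fnx !mulr0.
by rewrite xc mulrC (pp_torkill pp).
Qed.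

Lemma Fis_inj i x x' y : Fis i x y -> Fis i x' y -> I0R i (x - x').
Proof.
move=> F1 F2; apply: (pp_inj pp).
have -> : t i (x - x') = (t i x - y ^+ p) - (t i x' - y ^+ p) by rewrite rmorphB; ring.
exact: (idealB (I0R_ideal _)).
Qed.

Lemma Fis_tor_unique i (x1 x2 : R i) y :
  tor i x1 -> tor i x2 -> Fis i x1 y -> Fis i x2 y -> x1 = x2.
Proof.
move=> tx1 tx2 F1 F2; apply/subr0_eq/tor_I0R_eq0; first exact: torB.
exact: Fis_inj F1 F2.
Qed.

Lemma pillar_exp_I0R i z : pillar i z -> I0R i.+1 (z ^+ p).
Proof.
move=> Pz; apply/Fis_I0R_iff/(pp_ker pp); exists z.
by rewrite subrr; split=> //; apply: ideal0 (I0R_ideal _).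
Qed.

Lemma I0R_exp_pillar i y : I0R i.+1 (y ^+ p) <-> exists z, pillar i z /\ I0R i.+1 (y - z).
Proof. by split=> [/Fis_I0R_iff/(pp_ker pp)|/(pp_ker pp)/Fis_I0R_iff]. Qed.

Lemma t_generator_multiple f g : generates f I0 -> generates g I1 -> multiples (g ^+ p) (t 0%N f).
Proof.
move=> gf gg; apply: (idealX_multiples (fun z => (gg z).1)).
by apply/(pp_I1pow pp)/(I0R_in 1); apply: generates_mem gf.
Qed.

Hypothesis p_prime : prime p.

Lemma I0R_sub_pillar i z : I0R i.+1 z -> pillar i z.
Proof.
have [f gf] := pp_I0princ pp; have [g gg] := pp_I1princ pp.
have [a fa] := t_generator_multiple gf gg.
move/(I0R_generates (i := i.+1) gf) => [c ->].
rewrite tcompS fa rmorphM rmorphXn -(prednK (prime_gt0 p_prime)) exprSr !mulrA.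
by apply: idealMl; [apply: ext_ideal | apply/ext_in/(generates_mem gg)].
Qed.

Lemma Fis_addr_pillar i x y e : pillar i e -> Fis i x y -> Fis i x (y + e).
Proof.
move=> Pe; rewrite /Defs.Fis => Fxy; have idI := I0R_ideal i.+1.
have -> : t i x - (y + e) ^+ p = (t i x - y ^+ p) - ((y + e) ^+ p - y ^+ p - e ^+ p) - e ^+ p.
  by ring.
apply: (idealB idI); last exact: pillar_exp_I0R.
by apply: (idealB idI) => //; apply: ideal_binomial => //; apply: I0R_p.
Qed.

Lemma Fis_sub_pillar i x y y' :
  Fis i x y -> Fis i x y' -> exists z, pillar i z /\ I0R i.+1 (y - y' - z).
Proof.
rewrite /Defs.Fis => Fxy Fxy'; have idI := I0R_ideal i.+1.
apply/I0R_exp_pillar.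
have -> : (y - y') ^+ p = (t i x - y' ^+ p) - (t i x - y ^+ p)
                         - ((y - y' + y') ^+ p - (y - y') ^+ p - y' ^+ p).
  by rewrite subrK; ring.
by apply: (idealB idI); [apply: (idealB idI) | apply: ideal_binomial => //; apply: I0R_p].
Qed.
End Towers.

Arguments I0R_in {R t I0} i {a}.
Arguments I0R_generates {R t I0 f} i.
Arguments Fis_I0R_iff {R t p I0 i} y.

Definition Ftor_spec (R : nat -> comPzRingType) (t : forall i, {rmorphism R i -> R i.+1})
    (p : nat) (I0 : subsetR (R 0%N)) (i : nat) (g : R i.+1 -> R i) : Prop :=
  [/\ forall y, tor (tcomp R t i.+1) I0 y -> tor (tcomp R t i) I0 (g y),
      (forall y y', tor (tcomp R t i.+1) I0 y -> tor (tcomp R t i.+1) I0 y' ->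
         g y = g y' -> y = y'),
      (forall x, tor (tcomp R t i) I0 x -> exists y, tor (tcomp R t i.+1) I0 y /\ g y = x) &
      forall y, tor (tcomp R t i.+1) I0 y -> Fis R t p I0 i (g y) y].
Arguments Ftor_spec : clear implicits.

Section TowerMorphisms.
Local Open Scope ring_scope.
Variables (R S : nat -> comPzRingType).
Variables (t : forall i, {rmorphism R i -> R i.+1}) (u : forall i, {rmorphism S i -> S i.+1}).
Variable a : forall i, {rmorphism R i -> S i}.
Hypothesis Ha : tower_mor R S t u a.

Lemma mor_tcomp i x : a i (tcomp R t i x) = tcomp S u i (a 0%N x).
Proof. by elim: i x => //= i IHi x; rewrite Ha IHi. Qed.

Lemma mor_tup1 i x : a i.+1 (tup1 R t i x) = tup1 S u i (a 1%N x).
Proof. by elim: i x => //= i IHi x; rewrite Ha IHi. Qed.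

Variables (p : nat) (I0 : subsetR (R 0%N)) (J0 : subsetR (S 0%N)).

Lemma mor_tor f i x : generates f I0 -> generates (a 0%N f) J0 ->
  tor (tcomp R t i) I0 x -> tor (tcomp S u i) J0 (a i x).
Proof.
move=> gf gaf tx _ /gaf[c ->]; have [n fnx] := tx f (generates_mem gf).
exists n; rewrite rmorphM exprMn -mulrA /= -mor_tcomp.
by rewrite -[a i _ ^+ n]rmorphXn -rmorphM fnx rmorph0 mulr0.
Qed.

Lemma Fis_mor i x y : (forall z, I0R R t I0 i.+1 z -> I0R S u J0 i.+1 (a i.+1 z)) ->
  Fis R t p I0 i x y -> Fis S u p J0 i (a i x) (a i.+1 y).
Proof. by move=> aI /aI; rewrite /Defs.Fis rmorphB rmorphXn Ha. Qed.

Lemma Ftor_mor J1 (ppS : preperfectoid S u p J0 J1) i gR gS :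
  (forall z, I0R R t I0 i.+1 z -> I0R S u J0 i.+1 (a i.+1 z)) ->
  (forall j x, tor (tcomp R t j) I0 x -> tor (tcomp S u j) J0 (a j x)) ->
  Ftor_spec R t p I0 i gR -> Ftor_spec S u p J0 i gS ->
  forall y, tor (tcomp R t i.+1) I0 y -> a i (gR y) = gS (a i.+1 y).
Proof.
move=> aI atR [gRT _ _ gRF] [gST _ _ gSF] y ty.
apply: (Fis_tor_unique ppS); [exact/atR/gRT | exact/gST/atR | | exact/gSF/atR].
exact: Fis_mor (gRF _ ty).
Qed.

End TowerMorphisms.

Section Cartesian.
Variables (R R' S S' : comPzRingType).
Variables (P : subsetR R) (A : subsetR R') (B : subsetR S) (C : subsetR S').
Variables (r : R -> R') (s : R -> S) (f : R' -> S') (g : S -> S').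
Hypothesis cPABC : cartesian P A B C r s f g.

Lemma cartesian_mapl a : A a -> C (f a). Proof. by case: cPABC => _ [fAC _] _ _ _ /fAC. Qed.

Lemma cartesian_mapr b : B b -> C (g b). Proof. by case: cPABC => _ [_ gBC] _ _ _ /gBC. Qed.

Lemma cartesian_mem : (forall x, f (r x) = g (s x)) ->
  (forall x y, r x = r y -> s x = s y -> x = y) -> forall z, P z <-> A (r z) /\ B (s z).
Proof.
case: cPABC => PAB _ _ _ ABP comm inj z; split=> [/PAB //|[Arz Bsz]].
by have [x [Px rx sx]] := ABP _ _ Arz Bsz (comm z); rewrite -(inj _ _ rx sx).
Qed.

End Cartesian.

Section FibreProduct.
Local Open Scope ring_scope.
Variables (R R' S S' : comPzRingType).
Variables (rho : {rmorphism R -> R'}) (psi : {rmorphism R -> S}).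
Variables (psi' : {rmorphism R' -> S'}) (sigma : {rmorphism S -> S'}).
Hypothesis comm : forall x, psi' (rho x) = sigma (psi x).
Hypothesis fibre_inj : forall x y, rho x = rho y -> psi x = psi y -> x = y.
Hypothesis fibre_surj : forall a b, psi' a = sigma b -> exists x, rho x = a /\ psi x = b.

Lemma fibre_unit z : (exists a, rho z * a = 1) -> (exists b, psi z * b = 1) ->
  exists w, z * w = 1.
Proof.
move=> [a za] [b zb].
have ab : psi' a = sigma b.
  have za' : psi' (rho z) * psi' a = 1 by rewrite -rmorphM za rmorph1.
  have zb' : psi' (rho z) * sigma b = 1 by rewrite comm -rmorphM zb rmorph1.
  by rewrite -[LHS]mul1r -zb' mulrAC za' mul1r.
have [w [rw sw]] := fibre_surj ab.
by exists w; apply: fibre_inj; rewrite !rmorphM !rmorph1 ?rw ?sw.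
Qed.

Lemma fibre_lift_mod (J : subsetR S) (J' : subsetR S') :
  (forall c, J' c -> exists2 e, J e & sigma e = c) ->
  forall a b, J' (psi' a - sigma b) -> exists x, rho x = a /\ J (psi x - b).
Proof.
move=> J'J a b /J'J[e Je se].
have [x [rx sx]] : exists x, rho x = a /\ psi x = b + e.
  by apply: fibre_surj; rewrite rmorphD se addrC subrK.
by exists x; rewrite sx addrC addKr.
Qed.

End FibreProduct.

Lemma dep_functional_choice (A : Type) (B : A -> Type) (P : forall a, B a -> Prop) :
  (forall a, exists b, P a b) -> exists f : forall a, B a, forall a, P a (f a).
Proof.
by move=> ex; exists (fun a => proj1_sig (boolp.cid (ex a))) => a; apply: proj2_sig.
Qed.

Section FibreProductTower.
Local Open Scope ring_scope.
Local Unset Implicit Arguments.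
Variables (p : nat) (R' S S' R : nat -> comPzRingType).
Variables (t' : forall i, {rmorphism R' i -> R' i.+1}) (u : forall i, {rmorphism S i -> S i.+1}).
Variables (u' : forall i, {rmorphism S' i -> S' i.+1}) (t : forall i, {rmorphism R i -> R i.+1}).
Variables (I'0 : subsetR (R' 0%N)) (J0 : subsetR (S 0%N)) (J'0 : subsetR (S' 0%N)).
Variables (I'1 : subsetR (R' 1%N)) (J1 : subsetR (S 1%N)) (J'1 : subsetR (S' 1%N)).
Variables (I0 : subsetR (R 0%N)) (I1 : subsetR (R 1%N)).
Variables (psi' : forall i, {rmorphism R' i -> S' i}) (sigma : forall i, {rmorphism S i -> S' i}).
Variables (rho : forall i, {rmorphism R i -> R' i}) (psi : forall i, {rmorphism R i -> S i}).
Hypothesis p_prime : prime p.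
Hypotheses (ppR' : preperfectoid R' t' p I'0 I'1) (ppS : preperfectoid S u p J0 J1).
Hypothesis ppS' : preperfectoid S' u' p J'0 J'1.
Hypotheses (psi'_mor : tower_mor R' S' t' u' psi') (sigma_mor : tower_mor S S' u u' sigma).
Hypothesis J'0_ext : forall z, ext (sigma 0%N) J0 z <-> J'0 z.
Hypothesis J'1_ext : forall z, ext (sigma 1%N) J1 z <-> J'1 z.
Hypothesis sigma_surj : forall i (y : S' i), exists x : S i, sigma i x = y.
Hypotheses (rho_mor : tower_mor R R' t t' rho) (psi_mor : tower_mor R S t u psi).
Hypothesis fibre_comm : forall i x, psi' i (rho i x) = sigma i (psi i x).
Hypothesis fibre_inj : forall i (x y : R i), rho i x = rho i y -> psi i x = psi i y -> x = y.
Hypothesis fibre_surj : forall i (a : R' i) (b : S i), psi' i a = sigma i b ->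
  exists x : R i, rho i x = a /\ psi i x = b.
Hypothesis I0_fibre : forall x, I0 x <-> I'0 (rho 0%N x) /\ J0 (psi 0%N x).
Variables (f0 : R 0%N) (f1 : R 1%N).
Hypotheses (gf0 : generates f0 I0) (gf0' : generates (rho 0%N f0) I'0).
Hypothesis gf0s : generates (psi 0%N f0) J0.
Hypotheses (gf1 : generates f1 I1) (gf1' : generates (rho 1%N f1) I'1).
Hypothesis gf1s : generates (psi 1%N f1) J1.
Hypothesis cart0 : forall i,
  cartesian (I0R R t I0 i) (I0R R' t' I'0 i) (I0R S u J0 i) (I0R S' u' J'0 i)
            (rho i) (psi i) (psi' i) (sigma i).
Hypothesis cart1 : forall i,
  cartesian (ext (tup1 R t i) I1) (ext (tup1 R' t' i) I'1)
            (ext (tup1 S u i) J1) (ext (tup1 S' u' i) J'1)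
            (rho i.+1) (psi i.+1) (psi' i.+1) (sigma i.+1).
Hypothesis tor_onto : forall i (c : S' i), tor (tcomp S' u' i) J'0 c ->
  exists (a : R' i) (b : S i),
    [/\ tor (tcomp R' t' i) I'0 a, tor (tcomp S u i) J0 b & psi' i a + sigma i b = c].
Local Set Implicit Arguments.

Local Notation IR := (I0R R t I0).
Local Notation IR' := (I0R R' t' I'0).
Local Notation IS := (I0R S u J0).
Local Notation IS' := (I0R S' u' J'0).
Local Notation PR i := (ext (tup1 R t i) I1).
Local Notation PR' i := (ext (tup1 R' t' i) I'1).
Local Notation PS i := (ext (tup1 S u i) J1).
Local Notation PS' i := (ext (tup1 S' u' i) J'1).
Local Notation TR i := (tor (tcomp R t i) I0).
Local Notation TR' i := (tor (tcomp R' t' i) I'0).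
Local Notation TS i := (tor (tcomp S u i) J0).
Local Notation TS' i := (tor (tcomp S' u' i) J'0).

Lemma I0R_fibre i z : IR i z <-> IR' i (rho i z) /\ IS i (psi i z).
Proof. exact: cartesian_mem (cart0 i) (fibre_comm i) (fibre_inj i) z. Qed.

Lemma pillar_fibre i z : PR i z <-> PR' i (rho i.+1 z) /\ PS i (psi i.+1 z).
Proof. exact: cartesian_mem (cart1 i) (fibre_comm i.+1) (fibre_inj i.+1) z. Qed.

Lemma I0R_psi' i a : IR' i a -> IS' i (psi' i a). Proof. exact: cartesian_mapl (cart0 i) a. Qed.

Lemma I0R_sigma i b : IS i b -> IS' i (sigma i b). Proof. exact: cartesian_mapr (cart0 i) b. Qed.

Lemma Fis_fibre i x y :
  Fis R t p I0 i x y <->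
  Fis R' t' p I'0 i (rho i x) (rho i.+1 y) /\ Fis S u p J0 i (psi i x) (psi i.+1 y).
Proof. by rewrite /Defs.Fis -rho_mor -psi_mor -!rmorphXn -!rmorphB; apply: I0R_fibre. Qed.

Lemma Fis_psi' i x y : Fis R' t' p I'0 i x y -> Fis S' u' p J'0 i (psi' i x) (psi' i.+1 y).
Proof. exact/Fis_mor/I0R_psi'. Qed.

Lemma Fis_sigma i x y : Fis S u p J0 i x y -> Fis S' u' p J'0 i (sigma i x) (sigma i.+1 y).
Proof. exact/Fis_mor/I0R_sigma. Qed.

Lemma generates_J'0 : generates (sigma 0%N (psi 0%N f0)) J'0.
Proof. by move=> z; apply: iff_trans (iff_sym (J'0_ext z)) _; apply: ext_generates. Qed.

Lemma generates_J'1 : generates (sigma 1%N (psi 1%N f1)) J'1.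
Proof. by move=> z; apply: iff_trans (iff_sym (J'1_ext z)) _; apply: ext_generates. Qed.

Lemma sigma_onto_I0R i z : IS' i z -> exists2 e, IS i e & sigma i e = z.
Proof.
move: z; apply: (generates_image (sigma_surj i) (I0R_generates i gf0s)).
by rewrite (mor_tcomp sigma_mor); apply: I0R_generates generates_J'0.
Qed.

Lemma sigma_onto_pillar i z : PS' i z -> exists2 e, PS i e & sigma i.+1 e = z.
Proof.
move: z; apply: (generates_image (sigma_surj i.+1) (ext_generates (tup1 S u i) gf1s)).
by rewrite (mor_tup1 sigma_mor); apply: ext_generates generates_J'1.
Qed.

Lemma fibre_lift_I0R i a b : IS' i (psi' i a - sigma i b) ->
  exists x, rho i x = a /\ IS i (psi i x - b).
Proof. exact: (fibre_lift_mod (fibre_surj i) (J := IS i) (J' := IS' i) (@sigma_onto_I0R i)). Qed.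

Lemma tor_rho i x : TR i x -> TR' i (rho i x).
Proof. exact: (mor_tor rho_mor gf0 gf0'). Qed.

Lemma tor_psi i x : TR i x -> TS i (psi i x).
Proof. exact: (mor_tor psi_mor gf0 gf0s). Qed.

Lemma tor_psi' i a : TR' i a -> TS' i (psi' i a).
Proof. by apply: (mor_tor psi'_mor gf0'); rewrite fibre_comm; apply: generates_J'0. Qed.

Lemma tor_sigma i b : TS i b -> TS' i (sigma i b).
Proof. exact: (mor_tor sigma_mor gf0s generates_J'0). Qed.

Lemma tor_fibre i x : TR i x <-> TR' i (rho i x) /\ TS i (psi i x).
Proof.
split=> [tx|[tx' txs] a I0a]; first by split; [apply: tor_rho | apply: tor_psi].
exists 1%N; rewrite expr1; have [I'a Ja] := (I0_fibre a).1 I0a.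
apply: fibre_inj; rewrite !rmorph0 rmorphM.
  by rewrite (mor_tcomp rho_mor) (pp_torkill ppR' i _ _ I'a tx').
by rewrite (mor_tcomp psi_mor) (pp_torkill ppS i _ _ Ja txs).
Qed.

Lemma fibre_torkill i a x : I0 a -> TR i x -> tcomp R t i a * x = 0.
Proof.
move=> /I0_fibre[I'a Ja] /tor_fibre[tx' txs]; apply: fibre_inj; rewrite !rmorph0 rmorphM.
  by rewrite (mor_tcomp rho_mor) (pp_torkill ppR' i _ _ I'a tx').
by rewrite (mor_tcomp psi_mor) (pp_torkill ppS i _ _ Ja txs).
Qed.

Lemma fibre_I0R_t_inj i x : IR i.+1 (t i x) -> IR i x.
Proof.
move=> /I0R_fibre[]; rewrite rho_mor psi_mor => /(pp_inj ppR') ? /(pp_inj ppS) ?.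
exact/I0R_fibre.
Qed.

Lemma fibre_frob i y : exists x, Fis R t p I0 i x y.
Proof.
have [a Fa] := pp_frob ppR' i (rho i.+1 y); have [b Fb] := pp_frob ppS i (psi i.+1 y).
have /Fis_psi' Fa' := Fa; have /Fis_sigma Fb' := Fb; rewrite fibre_comm in Fa'.
have [x [rx xb]] := fibre_lift_I0R (Fis_inj ppS' Fa' Fb').
by exists x; apply/Fis_fibre; rewrite rx; split=> //; apply: Fis_eqmodl xb Fb.
Qed.

Lemma fibre_Fsurj i x : exists y, Fis R t p I0 i x y.
Proof.
have [a Fa] := pp_Fsurj ppR' i (rho i x); have [b Fb] := pp_Fsurj ppS i (psi i x).
have /Fis_psi' Fa' := Fa; have /Fis_sigma Fb' := Fb; rewrite fibre_comm in Fa'.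
have [z [Pz az]] := Fis_sub_pillar ppS' p_prime Fa' Fb'.
have [e Pe ez] := sigma_onto_pillar Pz.
have [y [ry yb]] : exists y, rho i.+1 y = a /\ IS i.+1 (psi i.+1 y - (b + e)).
  by apply: fibre_lift_I0R; rewrite rmorphD opprD addrA ez.
exists y; apply/Fis_fibre; rewrite ry; split=> //.
exact: Fis_eqmodr yb (Fis_addr_pillar ppS p_prime Pe Fb).
Qed.

Lemma f1_exp_I0R : IR 1 (f1 ^+ p).
Proof.
apply/I0R_fibre; rewrite !rmorphXn; split.
  exact/(pp_I1pow ppR')/idealX_exp/(generates_mem gf1').
exact/(pp_I1pow ppS)/idealX_exp/(generates_mem gf1s).
Qed.

Lemma f1_exp_divides_t_f0 : multiples (f1 ^+ p) (t 0%N f0).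
Proof.
have [a' ea'] := t_generator_multiple ppR' gf0' gf1'.
have [b eb] := t_generator_multiple ppS gf0s gf1s.
(* The two coefficients may disagree in S'; their difference [d] kills the generator of
   J'0 S'_1, so by (iv) it splits into torsion parts, which f1 ^+ p annihilates. *)
pose d := psi' 1%N a' - sigma 1%N b.
have ea'' : psi' 1%N a' * sigma 1%N (psi 1%N f1) ^+ p = u' 0%N (sigma 0%N (psi 0%N f0)).
  by rewrite -fibre_comm -rmorphXn -rmorphM -ea' psi'_mor fibre_comm.
have eb' : sigma 1%N b * sigma 1%N (psi 1%N f1) ^+ p = u' 0%N (sigma 0%N (psi 0%N f0)).
  by rewrite -rmorphXn -rmorphM -eb sigma_mor.
have d_tor : TS' 1 d.
  move=> _ /generates_J'0[c ->]; exists 1%N.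
  rewrite expr1 rmorphM /= -eb' -!mulrA [_ ^+ p * d]mulrC.
  by rewrite /d mulrBl ea'' eb' subrr !mulr0.
have [a [b' [ta tb' ab']]] := tor_onto _ _ d_tor.
have [c [rc sc]] : exists c, rho 1%N c = a' - a /\ psi 1%N c = b + b'.
  apply: fibre_surj; rewrite rmorphB rmorphD.
  have -> : psi' 1%N a = d - sigma 1%N b' by rewrite -ab' addrK.
  by rewrite /d; ring.
have [If1' If1s] := (I0R_fibre _).1 f1_exp_I0R; rewrite rmorphXn in If1'; rewrite rmorphXn in If1s.
exists c; apply: fibre_inj; rewrite rmorphM rmorphXn.
  by rewrite rho_mor ea' rc mulrBl (tor_mul_I0R ppR' ta If1') subr0.
by rewrite psi_mor eb sc mulrDl (tor_mul_I0R ppS tb' If1s) addr0.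
Qed.

Lemma fibre_I1pow z : idealX I1 p z <-> IR 1 z.
Proof.
split=> [/(idealX_multiples (fun z => (gf1 z).1))[c ->]|/(I0R_generates 1 gf0)[c ->] /=].
  by apply: (idealMl (I0R_ideal t I0 1)); apply: f1_exp_I0R.
have [c' ->] := f1_exp_divides_t_f0; rewrite mulrA.
exact/(idealMl (idealX_ideal _ _) (c * c'))/idealX_exp/(generates_mem gf1).
Qed.

Lemma fibre_I0R_exp_pillar i y :
  IR i.+1 (y ^+ p) <-> exists z, PR i z /\ IR i.+1 (y - z).
Proof.
have idR := I0R_ideal t I0 i.+1; have idS := I0R_ideal u J0 i.+1.
split=> [|[z [Pz yz]]]; last first.
  have [Pz' Pzs] := (pillar_fibre _).1 Pz.
  have zp : IR i.+1 (z ^+ p).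
    apply/I0R_fibre; rewrite !rmorphXn.
    by split; [apply: (pillar_exp_I0R ppR') | apply: (pillar_exp_I0R ppS)].
  by rewrite -(subrK (z ^+ p) (y ^+ p)); apply: (idealD idR) zp; apply: idealXX.
move=> /I0R_fibre[]; rewrite !rmorphXn.
move=> /(I0R_exp_pillar ppR')[z' [Pz' yz']] /(I0R_exp_pillar ppS)[zs [Pzs yzs]].
have [z [rz zzs]] : exists z, rho i.+1 z = z' /\ IS i.+1 (psi i.+1 z - zs).
  apply: fibre_lift_I0R; have := I0R_psi' yz'; have := I0R_sigma yzs.
  rewrite !rmorphB fibre_comm => yzs' yz''.
  have -> : psi' i.+1 z' - sigma i.+1 zs =
            (sigma i.+1 (psi i.+1 y) - sigma i.+1 zs) - (sigma i.+1 (psi i.+1 y) - psi' i.+1 z').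
    by ring.
  exact: (idealB (I0R_ideal u' J'0 i.+1)).
exists z; split.
  apply/pillar_fibre; rewrite rz; split=> //.
  rewrite -(subrK zs (psi _ z)); apply: (idealD (ext_ideal _ _)) Pzs.
  exact: (I0R_sub_pillar ppS p_prime).
apply/I0R_fibre; rewrite !rmorphB rz; split=> //.
have -> : psi i.+1 y - psi i.+1 z = (psi i.+1 y - zs) - (psi i.+1 z - zs) by ring.
exact: (idealB idS).
Qed.

Section FrobeniusTorsion.
Variables (i : nat) (g' : R' i.+1 -> R' i) (gs : S i.+1 -> S i) (gs' : S' i.+1 -> S' i).
Hypotheses (g'P : Ftor_spec R' t' p I'0 i g') (gsP : Ftor_spec S u p J0 i gs).
Hypothesis gs'P : Ftor_spec S' u' p J'0 i gs'.

Lemma psi'_Ftor y : TR' i.+1 y -> psi' i (g' y) = gs' (psi' i.+1 y).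
Proof. exact: (Ftor_mor psi'_mor ppS' (@I0R_psi' i.+1) (@tor_psi') g'P gs'P). Qed.

Lemma sigma_Ftor y : TS i.+1 y -> sigma i (gs y) = gs' (sigma i.+1 y).
Proof. exact: (Ftor_mor sigma_mor ppS' (@I0R_sigma i.+1) (@tor_sigma) gsP gs'P). Qed.

Lemma Ftor_glue : exists g : R i.+1 -> R i, forall y, TR i.+1 y ->
  rho i (g y) = g' (rho i.+1 y) /\ psi i (g y) = gs (psi i.+1 y).
Proof.
suff /dep_functional_choice[g gP] : forall y, exists x : R i,
    TR i.+1 y -> rho i x = g' (rho i.+1 y) /\ psi i x = gs (psi i.+1 y) by exists g.
move=> y; have [ty|nty] := classic (TR i.+1 y); last by exists 0; move/nty.
have [|x xP] := fibre_surj i (g' (rho i.+1 y)) (gs (psi i.+1 y)); last by exists x.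
by rewrite psi'_Ftor ?sigma_Ftor ?fibre_comm //; [apply: tor_psi | apply: tor_rho].
Qed.

Lemma fibre_Ftor_spec : exists g, Ftor_spec R t p I0 i g.
Proof.
have [g'T g'I g'S g'F] := g'P; have [gsT gsI gsS gsF] := gsP; have [_ gs'I _ _] := gs'P.
have [g gP] := Ftor_glue; exists g; split.
- move=> y ty; have [ty' tys] := (tor_fibre _).1 ty; have [gy' gys] := gP y ty.
  by apply/tor_fibre; rewrite gy' gys; split; [apply: g'T | apply: gsT].
- move=> y1 y2 ty1 ty2 g12.
  have [ty1' ty1s] := (tor_fibre _).1 ty1; have [g1' g1s] := gP y1 ty1.
  have [ty2' ty2s] := (tor_fibre _).1 ty2; have [g2' g2s] := gP y2 ty2.
  apply: fibre_inj; first by apply: g'I; rewrite // -g1' -g2' g12.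
  by apply: gsI; rewrite // -g1s -g2s g12.
- move=> x /tor_fibre[tx' txs].
  have [y' [ty' gy']] := g'S _ tx'; have [ys [tys gys]] := gsS _ txs.
  have [|y [ry sy]] := fibre_surj i.+1 y' ys.
    apply: gs'I; [exact: tor_psi' | exact: tor_sigma |].
    by rewrite -psi'_Ftor // -sigma_Ftor // gy' gys fibre_comm.
  have ty : TR i.+1 y by apply/tor_fibre; rewrite ry sy.
  exists y; split=> //; have [gry gsy] := gP y ty.
  by apply: fibre_inj; rewrite ?gry ?gsy ?ry ?sy.
- move=> y ty; have [ty' tys] := (tor_fibre _).1 ty; have [gy' gys] := gP y ty.
  by apply/Fis_fibre; rewrite gy' gys; split; [apply: g'F | apply: gsF].
Qed.

End FrobeniusTorsion.

Lemma fibre_preperfectoid : preperfectoid R t p I0 I1.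
Proof.
split.
- exact: generates_ideal gf0.
- by apply/I0_fibre; rewrite !rmorph_nat; split; [apply: (pp_p ppR') | apply: (pp_p ppS)].
- exact: fibre_I0R_t_inj.
- exact: fibre_frob.
- exact: fibre_Fsurj.
- by exists f0.
- by exists f1.
- exact: fibre_I1pow.
- by move=> i y; apply: iff_trans (Fis_I0R_iff y) (fibre_I0R_exp_pillar y).
- exact: fibre_torkill.
- move=> i; have [g' g'P] := pp_Ftor ppR' i; have [gs gsP] := pp_Ftor ppS i.
  have [gs' gs'P] := pp_Ftor ppS' i.
  exact: fibre_Ftor_spec g'P gsP gs'P.
Qed.

Lemma fibre_jacobson i x : (forall z, IR' i z -> jacobson z) ->
  (forall z, IS i z -> jacobson z) -> IR i x -> jacobson x.
Proof.
move=> jacR' jacS Ix; apply/jacobsonP => r.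
have /I0R_fibre[/jacR'/jacobsonP/(_ 1)[a ua] /jacS/jacobsonP/(_ 1)[b ub]] : IR i (r * x).
  exact: (idealMl (I0R_ideal t I0 i)).
apply: (fibre_unit (fibre_comm i) (fibre_inj i) (fibre_surj i)).
  by exists a; rewrite rmorphB rmorph1 -[rho i _]mul1r.
by exists b; rewrite rmorphB rmorph1 -[psi i _]mul1r.
Qed.

Lemma tilt_fibre_inj i (x y : forall j, R (j + i)%N) :
  tilt_eq R' t' I'0 i (tilt_map R R' rho i x) (tilt_map R R' rho i y) ->
  tilt_eq S u J0 i (tilt_map R S psi i x) (tilt_map R S psi i y) -> tilt_eq R t I0 i x y.
Proof.
by move=> exy' exys j; apply/I0R_fibre; rewrite !rmorphB; split; [apply: exy' | apply: exys].
Qed.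

Lemma tilt_fibre_surj i (a : forall j, R' (j + i)%N) (b : forall j, S (j + i)%N) :
  is_tilt R' t' p I'0 i a -> is_tilt S u p J0 i b ->
  tilt_eq S' u' J'0 i (tilt_map R' S' psi' i a) (tilt_map S S' sigma i b) ->
  exists x : forall j, R (j + i)%N,
    [/\ is_tilt R t p I0 i x, tilt_eq R' t' I'0 i (tilt_map R R' rho i x) a &
        tilt_eq S u J0 i (tilt_map R S psi i x) b].
Proof.
move=> ta tb ab; have [x xP] := dep_functional_choice (fun j => fibre_lift_I0R (ab j)).
exists x; split=> j; have [rx xb] := xP j.
- have [rx' xb'] := xP j.+1; apply/Fis_fibre; split; first by rewrite rx rx'; apply: ta.
  exact: Fis_eqmodl xb (Fis_eqmodr xb' (tb j)).
- by rewrite /tilt_map rx subrr; apply: ideal0 (I0R_ideal _ _ _).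
- exact: xb.
Qed.

End FibreProductTower.

Theorem proposition3p16 (p : nat) (p_prime : prime p)
  (* the towers R', S, S' with their ideals and first perfectoid pillars *)
  (R' S S' : nat -> comPzRingType)
  (t' : forall i, {rmorphism R' i -> R' i.+1})
  (u : forall i, {rmorphism S i -> S i.+1})
  (u' : forall i, {rmorphism S' i -> S' i.+1})
  (I'0 : subsetR (R' 0%N)) (J0 : subsetR (S 0%N)) (J'0 : subsetR (S' 0%N))
  (I'1 : subsetR (R' 1%N)) (J1 : subsetR (S 1%N)) (J'1 : subsetR (S' 1%N))
  (HR' : preperfectoid R' t' p I'0 I'1)
  (HS : preperfectoid S u p J0 J1)
  (HS' : preperfectoid S' u' p J'0 J'1)
  (* the morphisms psi' : R' -> S' and sigma : S -> S' *)
  (psi' : forall i, {rmorphism R' i -> S' i})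
  (sigma : forall i, {rmorphism S i -> S' i})
  (Hpsi' : tower_mor R' S' t' u' psi') (Hsigma : tower_mor S S' u u' sigma)
  (Hext0a : forall z, ext (psi' 0%N) I'0 z <-> J'0 z)
  (Hext0b : forall z, ext (sigma 0%N) J0 z <-> J'0 z)
  (Hext1a : forall z, ext (psi' 1%N) I'1 z <-> J'1 z)
  (Hext1b : forall z, ext (sigma 1%N) J1 z <-> J'1 z)
  (Hsigma_surj : forall i (y : S' i), exists x : S i, sigma i x = y)
  (* the levelwise fibre product tower R_i = R'_i x_{S'_i} S_i, with its
     projections rho and psi (a tower of rings together with morphisms of
     towers making each R_i a fibre product) *)
  (R : nat -> comPzRingType)
  (t : forall i, {rmorphism R i -> R i.+1})
  (rho : forall i, {rmorphism R i -> R' i})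
  (psi : forall i, {rmorphism R i -> S i})
  (Hrho : tower_mor R R' t t' rho) (Hpsi : tower_mor R S t u psi)
  (Hcomm : forall i x, psi' i (rho i x) = sigma i (psi i x))
  (Hfib_inj : forall i (x y : R i), rho i x = rho i y -> psi i x = psi i y -> x = y)
  (Hfib_surj : forall i (a : R' i) (b : S i), psi' i a = sigma i b ->
      exists x : R i, rho i x = a /\ psi i x = b)
  (* I_0 = I'_0 x_{J'_0} J_0 and I_1 = I'_1 x_{J'_1} J_1 *)
  (I0 : subsetR (R 0%N)) (I1 : subsetR (R 1%N))
  (HI0 : forall x, I0 x <-> I'0 (rho 0%N x) /\ J0 (psi 0%N x))
  (HI1 : forall x, I1 x <-> I'1 (rho 1%N x) /\ J1 (psi 1%N x))
  (* (i) *)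
  (Hf0 : exists f0 : R 0%N,
      [/\ generates f0 I0, generates (rho 0%N f0) I'0 & generates (psi 0%N f0) J0])
  (* (ii) *)
  (Hf1 : exists f1 : R 1%N,
      [/\ generates f1 I1, generates (rho 1%N f1) I'1 & generates (psi 1%N f1) J1])
  (* (iii) *)
  (Hcart0 : forall i,
      cartesian (I0R R t I0 i) (I0R R' t' I'0 i) (I0R S u J0 i) (I0R S' u' J'0 i)
                (rho i) (psi i) (psi' i) (sigma i))
  (Hcart1 : forall i,
      cartesian (ext (tup1 R t i) I1) (ext (tup1 R' t' i) I'1)
                (ext (tup1 S u i) J1) (ext (tup1 S' u' i) J'1)
                (rho i.+1) (psi i.+1) (psi' i.+1) (sigma i.+1))
  (* (iv) *)
  (Htor : forall i (c : S' i), tor (tcomp S' u' i) J'0 c ->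
      exists (a : R' i) (b : S i),
        [/\ tor (tcomp R' t' i) I'0 a, tor (tcomp S u i) J0 b & (psi' i a + sigma i b)%R = c]) :
  (* (1) *)
  preperfectoid R t p I0 I1 /\
  (* (2) *)
  (perfectoid R' t' p I'0 I'1 -> perfectoid S u p J0 J1 -> perfectoid S' u' p J'0 J'1 ->
   perfectoid R t p I0 I1) /\
  (* (3) the map R_i^{s.flat} -> R'_i^{s.flat} x_{S'_i^{s.flat}} S_i^{s.flat},
     x |-> (rho^flat x, psi^flat x), is bijective for every i *)
  (forall i,
     (forall x y : forall j, R (j + i)%N,
        is_tilt R t p I0 i x -> is_tilt R t p I0 i y ->
        tilt_eq R' t' I'0 i (tilt_map R R' rho i x) (tilt_map R R' rho i y) ->
        tilt_eq S u J0 i (tilt_map R S psi i x) (tilt_map R S psi i y) ->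
        tilt_eq R t I0 i x y) /\
     (forall (a : forall j, R' (j + i)%N) (b : forall j, S (j + i)%N),
        is_tilt R' t' p I'0 i a -> is_tilt S u p J0 i b ->
        tilt_eq S' u' J'0 i (tilt_map R' S' psi' i a) (tilt_map S S' sigma i b) ->
        exists x : forall j, R (j + i)%N,
          [/\ is_tilt R t p I0 i x,
              tilt_eq R' t' I'0 i (tilt_map R R' rho i x) a &
              tilt_eq S u J0 i (tilt_map R S psi i x) b])).
Proof.
have [f0 [gf0 gf0' gf0s]] := Hf0; have [f1 [gf1 gf1' gf1s]] := Hf1.
have ppR := fibre_preperfectoid p_prime HR' HS HS' Hpsi' Hsigma Hext0b Hext1b Hsigma_surj
  Hrho Hpsi Hcomm Hfib_inj Hfib_surj HI0 gf0 gf0' gf0s gf1 gf1' gf1s Hcart0 Hcart1 Htor.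
split=> //; split=> [[_ jacR'] [_ jacS] _|i].
  by split=> // i x; apply: (fibre_jacobson Hcomm Hfib_inj Hfib_surj Hcart0 (jacR' i) (jacS i)).
split=> [x y _ _|]; first exact: (tilt_fibre_inj Hcomm Hfib_inj Hcart0).
exact: (tilt_fibre_surj Hsigma Hext0b Hsigma_surj Hrho Hpsi Hcomm Hfib_inj Hfib_surj gf0s Hcart0).
Qed.
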